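(* Let $\{A,S_0,\Pi_0\}$ be an admissible triple with $\pm\mathrm{i}\notin\sigma(A)$, and write $\Pi_0=\begin{bmatrix}\vartheta_1&\vartheta_2\end{bmatrix}$. Then for all $k\ge0$ $$\Pi_k=\begin{bmatrix}(I_n+\mathrm{i} A^{-1})^k\vartheta_1 & (I_n-\mathrm{i} A^{-1})^k\vartheta_2\end{bmatrix},$$ and with $R_k:=(I_n+\mathrm{i} A^{-1})^{-k}S_k\big(I_n-\mathrm{i}(A^* )^{-1}\big)^{-k}$ and $Q_k:=(I_n-\mathrm{i} A^{-1})^{-k}S_k\big(I_n+\mathrm{i}(A^* )^{-1}\big)^{-k}$ one has $$R_{k+1}-R_k=2(I_n+\mathrm{i} A^{-1})^{-k-1}A^{-1}(I_n-\mathrm{i} A^{-1})^k\vartheta_2\vartheta_2^*\big((I_n-\mathrm{i} A^{-1})^k\big)^*(A^{-1})^*\big((I_n+\mathrm{i} A^{-1})^{-k-1}\big)^*\ge0,$$ and $Q_{k+1}-Q_k\ge0$. Consequently the limits $\varkappa_R:=\lim_{k\to\infty}R_k^{-1}\ge0$ and $\varkappa_Q:=\lim_{k\to\infty}Q_k^{-1}\ge0$ exist.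
   Context: Fix positive integers $m_1,m_2$, $m=m_1+m_2$, $j=\mathrm{diag}(I_{m_1},-I_{m_2})$, $n\in\mathbb{N}$. An admissible triple (self-adjoint case) consists of an $n\times n$ matrix $A$ with $\det A\ne0$, an $n\times n$ matrix $S_0>0$, and an $n\times m$ matrix $\Pi_0$ with $AS_0-S_0A^*=\mathrm{i}\,\Pi_0j\Pi_0^*$; $\vartheta_1,\vartheta_2$ are the $n\times m_1$ and $n\times m_2$ blocks of $\Pi_0$. The sequences are defined for $k\ge0$ by $\Pi_{k+1}=\Pi_k+\mathrm{i} A^{-1}\Pi_k j$ and $S_{k+1}=S_k+A^{-1}S_k(A^* )^{-1}+A^{-1}\Pi_k\Pi_k^*(A^* )^{-1}$ (so $S_k>0$ and $AS_k-S_kA^*=\mathrm{i}\Pi_kj\Pi_k^*$ for all $k$). $\sigma(A)$ is the spectrum of $A$. *)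

From HB Require Import structures.
From mathcomp Require Import all_boot all_order all_algebra.
Set Implicit Arguments. Unset Strict Implicit. Unset Printing Implicit Defensive.
Import Order.TTheory GRing.Theory Num.Theory.
Local Open Scope ring_scope.

Section Defs.
Variable C : numClosedFieldType.

Definition ctrmx (p q : nat) (M : 'M[C]_(p, q)) : 'M[C]_(q, p) := (map_mx Num.conj M)^T.

Definition psdmx (n : nat) (M : 'M[C]_n) : Prop :=
  ctrmx M = M /\ forall v : 'cV[C]_n, 0 <= (ctrmx v *m M *m v) 0 0.

Definition pdmx (n : nat) (M : 'M[C]_n) : Prop :=
  ctrmx M = M /\ forall v : 'cV[C]_n, v != 0 -> 0 < (ctrmx v *m M *m v) 0 0.

Definition jmx (m1 m2 : nat) : 'M[C]_(m1 + m2) := block_mx 1%:M 0 0 (- 1%:M).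

Definition admissible (n m1 m2 : nat) (A S0 : 'M[C]_n) (Pi0 : 'M[C]_(n, m1 + m2)) : Prop :=
  \det A != 0 /\ pdmx S0 /\
  A *m S0 - S0 *m ctrmx A = 'i *: (Pi0 *m jmx m1 m2 *m ctrmx Pi0).

Fixpoint Piseq (n m1 m2 : nat) (A : 'M[C]_n) (Pi0 : 'M[C]_(n, m1 + m2)) (k : nat)
  : 'M[C]_(n, m1 + m2) :=
  if k is k'.+1 then
    Piseq A Pi0 k' + 'i *: (invmx A *m Piseq A Pi0 k' *m jmx m1 m2)
  else Pi0.

Fixpoint Sseq (n m1 m2 : nat) (A S0 : 'M[C]_n) (Pi0 : 'M[C]_(n, m1 + m2)) (k : nat)
  : 'M[C]_n :=
  if k is k'.+1 then
    Sseq A S0 Pi0 k' + invmx A *m Sseq A S0 Pi0 k' *m invmx (ctrmx A)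
    + invmx A *m Piseq A Pi0 k' *m ctrmx (Piseq A Pi0 k') *m invmx (ctrmx A)
  else S0.

Definition mx_cvg (p q : nat) (u : nat -> 'M[C]_(p, q)) (L : 'M[C]_(p, q)) : Prop :=
  forall eps : C, 0 < eps -> exists N : nat, forall k : nat, (N <= k)%N ->
    forall i j, `|u k i j - L i j| < eps.

(* least-upper-bound property of the real numbers of C; together with
   algebraic closedness this pins C down to the complex numbers *)
Definition real_complete : Prop :=
  forall E : C -> Prop, (forall x, E x -> x \is Num.real) -> (exists x, E x) ->
  (exists M, M \is Num.real /\ forall x, E x -> x <= M) ->
  exists s, s \is Num.real /\ (forall x, E x -> x <= s) /\
    (forall M, M \is Num.real -> (forall x, E x -> x <= M) -> s <= M).

End Defs.

(* Write B = A^-1 and B' = (A^* )^-1.  Since j = diag(I, -I), the recursion for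
   Pi_k acts on its two blocks X_k, Y_k separately, by I + iB and I - iB.
   Multiplying A S_k - S_k A^* = i Pi_k j Pi_k^* by B on the left and by B' on
   the right gives S_k B' - B S_k = i B (X_k X_k^* - Y_k Y_k^* ) B'; this form
   propagates along the recursion, and inserting it into (I + iB) S_k (I - iB')
   yields S_(k+1) = (I + iB) S_k (I + iB)^* + 2 B Y_k Y_k^* B', and symmetrically
   with I - iB and X_k.  So R_k and Q_k increase by Gram matrices from S_0 > 0;
   their inverses decrease in the Loewner order while staying >= 0, their
   quadratic forms converge by completeness of the reals, and polarization
   gives the convergence of the entries. *)

From HB Require Import structures.
From mathcomp Require Import all_boot all_order all_algebra.
From mathcomp Require Import ring.
From Stdlib Require Import Classical ClassicalEpsilon.
Import Order.TTheory GRing.Theory Num.Theory.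
Local Open Scope ring_scope.
Set Implicit Arguments. Unset Strict Implicit. Unset Printing Implicit Defensive.

Section ConjugateTranspose.
Variable C : numClosedFieldType.

Lemma ctrmxE p q (M : 'M[C]_(p, q)) i j : ctrmx M i j = (M j i)^*.
Proof. by rewrite /ctrmx !mxE. Qed.

Lemma ctrmxK p q (M : 'M[C]_(p, q)) : ctrmx (ctrmx M) = M.
Proof. by apply/matrixP=> i j; rewrite !ctrmxE conjCK. Qed.

Lemma ctrmx_mul p q r (M : 'M[C]_(p, q)) (N : 'M[C]_(q, r)) :
  ctrmx (M *m N) = ctrmx N *m ctrmx M.
Proof. by rewrite /ctrmx map_mxM trmx_mul. Qed.

Lemma ctrmxD p q (M N : 'M[C]_(p, q)) : ctrmx (M + N) = ctrmx M + ctrmx N.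
Proof. by apply/matrixP=> i j; rewrite !ctrmxE !mxE rmorphD. Qed.

Lemma ctrmxB p q (M N : 'M[C]_(p, q)) : ctrmx (M - N) = ctrmx M - ctrmx N.
Proof. by apply/matrixP=> i j; rewrite !ctrmxE !mxE rmorphB. Qed.

Lemma ctrmxZ p q a (M : 'M[C]_(p, q)) : ctrmx (a *: M) = a^* *: ctrmx M.
Proof. by apply/matrixP=> i j; rewrite !ctrmxE !mxE rmorphM. Qed.

Lemma ctrmx1 p : ctrmx (1%:M : 'M[C]_p) = 1%:M.
Proof. by apply/matrixP=> i j; rewrite ctrmxE !mxE eq_sym rmorphMn /= conjC1. Qed.

Lemma ctrmx0 p q : ctrmx (0 : 'M[C]_(p, q)) = 0.
Proof. by apply/matrixP=> i j; rewrite ctrmxE !mxE conjC0. Qed.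

Lemma ctrmx_row p q1 q2 (X : 'M[C]_(p, q1)) (Y : 'M[C]_(p, q2)) :
  ctrmx (row_mx X Y) = col_mx (ctrmx X) (ctrmx Y).
Proof. by rewrite /ctrmx map_row_mx tr_row_mx. Qed.

Lemma unitmx_ctrmx p (M : 'M[C]_p) : (ctrmx M \in unitmx) = (M \in unitmx).
Proof. by rewrite !unitmxE !unitfE /ctrmx det_tr det_map_mx conjC_eq0. Qed.

Lemma ctrmx_inv p (M : 'M[C]_p) : ctrmx (invmx M) = invmx (ctrmx M).
Proof.
have [uM|nuM] := boolP (M \in unitmx); last by rewrite !invmx_out ?inE ?unitmx_ctrmx.
have uM' : ctrmx M \in unitmx by rewrite unitmx_ctrmx.
by apply: (can_inj (mulKmx uM')); rewrite -ctrmx_mul mulVmx // mulmxV // ctrmx1.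
Qed.

Lemma ctrmxX p (M : 'M[C]_p) k : ctrmx (M ^+ k) = ctrmx M ^+ k.
Proof.
elim: k => [|k IH]; first by rewrite !expr0 ctrmx1.
by rewrite exprS -mulmxE ctrmx_mul IH exprSr mulmxE.
Qed.

Lemma ctrmx_mul_gram p q r (M : 'M[C]_(p, q)) (Z : 'M[C]_(q, r)) :
  M *m Z *m ctrmx (M *m Z) = M *m (Z *m ctrmx Z) *m ctrmx M.
Proof. by rewrite ctrmx_mul !mulmxA. Qed.

Lemma ctrmx_1_addi p (M : 'M[C]_p) : ctrmx (1%:M + 'i *: M) = 1%:M - 'i *: ctrmx M.
Proof. by rewrite ctrmxD ctrmx1 ctrmxZ conjCi scaleNr. Qed.

Lemma ctrmx_1_subi p (M : 'M[C]_p) : ctrmx (1%:M - 'i *: M) = 1%:M + 'i *: ctrmx M.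
Proof. by rewrite ctrmxB ctrmx1 ctrmxZ conjCi scaleNr opprK. Qed.

End ConjugateTranspose.

Lemma invmx_mul (R : comUnitRingType) p (M N : 'M[R]_p) :
  M \in unitmx -> N \in unitmx -> invmx (M *m N) = invmx N *m invmx M.
Proof.
move=> uM uN; have uMN : M *m N \in unitmx by rewrite unitmx_mul uM uN.
by apply: (can_inj (mulKmx uMN)); rewrite mulmxV // !mulmxA mulmxK // mulmxV.
Qed.

Lemma unitmxX (R : comUnitRingType) p (M : 'M[R]_p) k :
  M \in unitmx -> M ^+ k \in unitmx.
Proof.
move=> uM; elim: k => [|k IH]; first by rewrite expr0 unitmx1.
by rewrite exprS -mulmxE unitmx_mul uM IH.
Qed.

Lemma sandwich_invmxX_succ (R : comUnitRingType) p (M Ms T T' U : 'M[R]_p) k :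
  M \in unitmx -> Ms \in unitmx -> T' = M *m T *m Ms + U ->
  invmx (M ^+ k.+1) *m T' *m invmx (Ms ^+ k.+1) - invmx (M ^+ k) *m T *m invmx (Ms ^+ k)
  = invmx (M ^+ k.+1) *m U *m invmx (Ms ^+ k.+1).
Proof.
move=> uM uMs ->; rewrite mulmxDr mulmxDl addrAC.
suff -> : invmx (M ^+ k.+1) *m (M *m T *m Ms) *m invmx (Ms ^+ k.+1) =
  invmx (M ^+ k) *m T *m invmx (Ms ^+ k) by rewrite subrr add0r.
rewrite exprS exprSr -!mulmxE !invmx_mul ?unitmxX // !mulmxA mulmxKV //.
by rewrite -(mulmxA _ Ms) mulmxV // mulmx1.
Qed.

(* [ring] cannot work with matrices.  Once a matrix identity is expanded into
   linear combinations of products, it is checked on a generic entry, where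
   [mxentry] keeps each product an opaque atom. *)
Definition mxentry (R : pzRingType) p q (i : 'I_p) (j : 'I_q) (M : 'M[R]_(p, q)) :=
  M i j.

Section MxEntry.
Variables (R : comPzRingType) (p q : nat).
Implicit Types M N : 'M[R]_(p, q).

Lemma mxentry_eq M N : (forall i j, mxentry i j M = mxentry i j N) -> M = N.
Proof. by move=> eqMN; apply/matrixP => i' j'; apply: eqMN. Qed.

Lemma mxentryD i j M N : mxentry i j (M + N) = mxentry i j M + mxentry i j N.
Proof. by rewrite /mxentry mxE. Qed.

Lemma mxentryN i j M : mxentry i j (- M) = - mxentry i j M.
Proof. by rewrite /mxentry mxE. Qed.

Lemma mxentryZ i j a M : mxentry i j (a *: M) = a * mxentry i j M.
Proof. by rewrite /mxentry mxE. Qed.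

Lemma mxentry0 i j : mxentry i j (0 : 'M[R]_(p, q)) = 0.
Proof. by rewrite /mxentry mxE. Qed.

End MxEntry.

Ltac mx_expand := repeat progress rewrite ?mulmxDl ?mulmxDr ?mulmxBl ?mulmxBr
  ?mulNmx ?mulmxN ?mul1mx ?mulmx1 ?mul0mx ?mulmx0 ?scalerDr ?scalerBr ?scalerN
  ?scalerA -?scalemxAl -?scalemxAr ?mulmxA.

Ltac mx_ring := apply: mxentry_eq => ? ?;
  repeat progress rewrite ?mxentryD ?mxentryN ?mxentryZ ?mxentry0;
  repeat progress rewrite ?mulrDr ?mulrBr ?mulrN ?mulrA ?mulCii; ring.

Section CayleySandwich.
Variables (C : numClosedFieldType) (p : nat) (B Bs : 'M[C]_p).

Definition sylvmx (X : 'M[C]_p) := X *m Bs - B *m X.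

Lemma sylvmxD X Y : sylvmx (X + Y) = sylvmx X + sylvmx Y.
Proof. by rewrite /sylvmx mulmxDl mulmxDr addrACA opprD. Qed.

Lemma sylvmx_sandwich X : sylvmx (B *m X *m Bs) = B *m sylvmx X *m Bs.
Proof. by rewrite /sylvmx mulmxBr mulmxBl !mulmxA. Qed.

Lemma cayley_sandwichP X :
  (1%:M + 'i *: B) *m X *m (1%:M - 'i *: Bs) = X + B *m X *m Bs - 'i *: sylvmx X.
Proof. rewrite /sylvmx; mx_expand; mx_ring. Qed.

Lemma cayley_sandwichN X :
  (1%:M - 'i *: B) *m X *m (1%:M + 'i *: Bs) = X + B *m X *m Bs + 'i *: sylvmx X.
Proof. rewrite /sylvmx; mx_expand; mx_ring. Qed.

Variables (S P N : 'M[C]_p).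
Hypothesis sylvS : sylvmx S = 'i *: (B *m (P - N) *m Bs).

Lemma sylvmx_step :
  sylvmx (S + B *m S *m Bs + B *m (P + N) *m Bs) =
  'i *: (B *m ((1%:M + 'i *: B) *m P *m (1%:M - 'i *: Bs)
              - (1%:M - 'i *: B) *m N *m (1%:M + 'i *: Bs)) *m Bs).
Proof.
rewrite !sylvmxD !sylvmx_sandwich sylvmxD sylvS cayley_sandwichP cayley_sandwichN.
mx_expand; mx_ring.
Qed.

Lemma step_cayleyP :
  S + B *m S *m Bs + B *m (P + N) *m Bs =
  (1%:M + 'i *: B) *m S *m (1%:M - 'i *: Bs) + 2%:R *: (B *m N *m Bs).
Proof. rewrite cayley_sandwichP sylvS; mx_expand; mx_ring. Qed.

Lemma step_cayleyN :
  S + B *m S *m Bs + B *m (P + N) *m Bs =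
  (1%:M - 'i *: B) *m S *m (1%:M + 'i *: Bs) + 2%:R *: (B *m P *m Bs).
Proof. rewrite cayley_sandwichN sylvS; mx_expand; mx_ring. Qed.

End CayleySandwich.

Section AdmissibleSequences.
Variables (C : numClosedFieldType) (n m1 m2 : nat).
Variables (A S0 : 'M[C]_n) (Pi0 : 'M[C]_(n, m1 + m2)).

Local Notation B := (invmx A).
Local Notation Bs := (invmx (ctrmx A)).
Local Notation Ap := (1%:M + 'i *: invmx A).
Local Notation Am := (1%:M - 'i *: invmx A).
Local Notation X k := (Ap ^+ k *m lsubmx Pi0).
Local Notation Y k := (Am ^+ k *m rsubmx Pi0).
Local Notation S := (Sseq A S0 Pi0).

Lemma mul_row_jmx_ctrmx (U : 'M[C]_(n, m1)) (V : 'M[C]_(n, m2)) :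
  row_mx U V *m jmx C m1 m2 *m ctrmx (row_mx U V) = U *m ctrmx U - V *m ctrmx V.
Proof.
rewrite /jmx mul_row_block !mulmx0 !mulmx1 addr0 add0r ctrmx_row mul_row_col.
by rewrite mulmxN mulNmx mulmx1.
Qed.

Lemma Piseq_blocks k : Piseq A Pi0 k = row_mx (X k) (Y k).
Proof.
elim: k => [|k IH] /=; first by rewrite !expr0 !mul1mx hsubmxK.
rewrite IH -mulmxA /jmx mul_row_block !mulmx0 !mulmx1 addr0 add0r mulmxN.
rewrite mul_mx_row scale_row_mx add_row_mx !exprS -!mulmxE.
by congr row_mx; mx_expand.
Qed.

Lemma Sseq_succ k :
  S k.+1 = S k + B *m S k *m Bs + B *m (X k *m ctrmx (X k) + Y k *m ctrmx (Y k)) *m Bs.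
Proof. by rewrite /= Piseq_blocks -(mulmxA B (row_mx _ _)) ctrmx_row mul_row_col. Qed.

Lemma sylvmx_invmx (T D : 'M[C]_n) : A \in unitmx ->
  A *m T - T *m ctrmx A = 'i *: D -> sylvmx B Bs T = 'i *: (B *m D *m Bs).
Proof.
move=> uA eqT; rewrite scalemxAl scalemxAr -eqT /sylvmx mulmxBr mulmxBl !mulmxA.
by rewrite mulVmx // mul1mx -(mulmxA _ (ctrmx A)) mulmxV ?unitmx_ctrmx // mulmx1.
Qed.

Lemma unitmx_1_sub_invmx c : A \in unitmx -> ~~ eigenvalue A c ->
  1%:M - c *: B \in unitmx.
Proof.
move=> uA noeig; rewrite unitmxE unitfE; apply: contra noeig => /det0P [w nz w0].
apply/eigenvalueP; exists w => //; apply/eqP; rewrite -subr_eq0.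
have /(congr1 (mulmx^~ A)) := w0; rewrite mul0mx => <-.
by rewrite mulmxBr mulmx1 -scalemxAr mulmxBl -scalemxAl mulmxKV.
Qed.

Lemma ctrmx_Ap : ctrmx Ap = 1%:M - 'i *: Bs.
Proof. by rewrite ctrmx_1_addi ctrmx_inv. Qed.

Lemma ctrmx_Am : ctrmx Am = 1%:M + 'i *: Bs.
Proof. by rewrite ctrmx_1_subi ctrmx_inv. Qed.

Lemma admissible_unitmx : admissible A S0 Pi0 -> A \in unitmx.
Proof. by case=> detA _; rewrite unitmxE unitfE. Qed.

Hypothesis admA : admissible A S0 Pi0.

Lemma sylvmx_Sseq k :
  sylvmx B Bs (S k) = 'i *: (B *m (X k *m ctrmx (X k) - Y k *m ctrmx (Y k)) *m Bs).
Proof.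
have uA := admissible_unitmx admA; have [_ [_ eqS0]] := admA.
elim: k => [|k IH].
  apply: sylvmx_invmx => //; rewrite eqS0 -[in LHS](hsubmxK Pi0).
  by rewrite mul_row_jmx_ctrmx !expr0 !mul1mx.
have mulmx_exprS M Z : M *m (M ^+ k *m Z) = M ^+ k.+1 *m Z :> 'M_(n, _).
  by rewrite exprS -mulmxE mulmxA.
by rewrite Sseq_succ (sylvmx_step IH) -ctrmx_Ap -ctrmx_Am -!ctrmx_mul_gram !mulmx_exprS.
Qed.

Lemma Sseq_succ_Ap k :
  S k.+1 = Ap *m S k *m ctrmx Ap + 2%:R *: (B *m (Y k *m ctrmx (Y k)) *m Bs).
Proof. by rewrite Sseq_succ ctrmx_Ap (step_cayleyP (sylvmx_Sseq k)). Qed.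

Lemma Sseq_succ_Am k :
  S k.+1 = Am *m S k *m ctrmx Am + 2%:R *: (B *m (X k *m ctrmx (X k)) *m Bs).
Proof. by rewrite Sseq_succ ctrmx_Am (step_cayleyN (sylvmx_Sseq k)). Qed.

Local Notation R k := (invmx (Ap ^+ k) *m S k *m invmx ((1%:M - 'i *: Bs) ^+ k)).
Local Notation Q k := (invmx (Am ^+ k) *m S k *m invmx ((1%:M + 'i *: Bs) ^+ k)).

Lemma Rseq_succ_sub k : ~~ eigenvalue A (- 'i) ->
  R k.+1 - R k = 2%:R *: (invmx (Ap ^+ k.+1) *m B *m Y k
                          *m ctrmx (invmx (Ap ^+ k.+1) *m B *m Y k)).
Proof.
move=> noeig; have uA := admissible_unitmx admA.
have uAp : Ap \in unitmx by move: (unitmx_1_sub_invmx uA noeig); rewrite scaleNr opprK.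
rewrite -ctrmx_Ap (sandwich_invmxX_succ _ _ _ (Sseq_succ_Ap k)) ?unitmx_ctrmx //.
by rewrite !ctrmx_mul !ctrmx_inv !ctrmxX -scalemxAr -scalemxAl !mulmxA.
Qed.

Lemma Qseq_succ_sub k : ~~ eigenvalue A 'i ->
  Q k.+1 - Q k = 2%:R *: (invmx (Am ^+ k.+1) *m B *m X k
                          *m ctrmx (invmx (Am ^+ k.+1) *m B *m X k)).
Proof.
move=> noeig; have uAm := unitmx_1_sub_invmx (admissible_unitmx admA) noeig.
rewrite -ctrmx_Am (sandwich_invmxX_succ _ _ _ (Sseq_succ_Am k)) ?unitmx_ctrmx //.
by rewrite !ctrmx_mul !ctrmx_inv !ctrmxX -scalemxAr -scalemxAl !mulmxA.
Qed.

End AdmissibleSequences.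

Section PositiveMatrices.
Variable C : numClosedFieldType.

Definition qform p (M : 'M[C]_p) (v : 'cV[C]_p) := (ctrmx v *m M *m v) 0 0.

Lemma ctrmx_mul_self_ge0 p (w : 'cV[C]_p) : 0 <= (ctrmx w *m w) 0 0.
Proof.
rewrite mxE; apply: sumr_ge0 => i _; rewrite ctrmxE mulrC; exact: mul_conjC_ge0.
Qed.

Lemma psdmx_gram p q (a : nat) (Z : 'M[C]_(p, q)) : psdmx (a%:R *: (Z *m ctrmx Z)).
Proof.
split; first by rewrite ctrmxZ ctrmx_mul ctrmxK conjC_nat.
move=> v; rewrite -scalemxAr -scalemxAl mxE; apply: mulr_ge0; first exact: ler0n.
rewrite (_ : _ *m v = ctrmx (ctrmx Z *m v) *m (ctrmx Z *m v)).
  exact: ctrmx_mul_self_ge0.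
by rewrite ctrmx_mul ctrmxK !mulmxA.
Qed.

Lemma pdmx_qform_ge0 p (M : 'M[C]_p) v : pdmx M -> 0 <= qform M v.
Proof.
case=> _ posM; have [->|nz] := eqVneq v 0; last exact: ltW (posM v nz).
by rewrite /qform mulmx0 mxE.
Qed.

Lemma pdmxD p (M D : 'M[C]_p) : pdmx M -> psdmx D -> pdmx (M + D).
Proof.
case=> hM posM [hD nnegD]; split; first by rewrite ctrmxD hM hD.
move=> v nz; rewrite mulmxDr mulmxDl mxE.
exact: ltr_wpDr (nnegD v) (posM v nz).
Qed.

Lemma pdmx_unit p (M : 'M[C]_p) : pdmx M -> M \in unitmx.
Proof.
case=> _ posM; rewrite unitmxE unitfE; apply/negP => /det0P [w nz wM].
have nzw : ctrmx w != 0 by apply: contra nz => /eqP w0; rewrite -[w]ctrmxK w0 ctrmx0.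
by have := posM _ nzw; rewrite ctrmxK wM mul0mx mxE ltxx.
Qed.

Lemma psdmx_invmx p (M : 'M[C]_p) : pdmx M -> psdmx (invmx M).
Proof.
move=> pdM; have uM := pdmx_unit pdM; case: (pdM) => hM _.
split; first by rewrite ctrmx_inv hM.
move=> v; set y := invmx M *m v.
have -> : v = M *m y by rewrite /y mulKVmx.
rewrite ctrmx_mul hM mulmxK // mulmxA.
exact: pdmx_qform_ge0.
Qed.

(* With x = (M + D)^-1 v and y = M^-1 v, the difference of the two forms is
   (x - y)^* M (x - y) + x^* D x. *)
Lemma qform_invmxD_le p (M D : 'M[C]_p) v : pdmx M -> psdmx D ->
  qform (invmx (M + D)) v <= qform (invmx M) v.
Proof.
move=> pdM psdD; have uM := pdmx_unit pdM; have uMD := pdmx_unit (pdmxD pdM psdD).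
case: (pdM) => hM _; case: (psdD) => _ nnegD.
set x := invmx (M + D) *m v; set y := invmx M *m v.
have ex : (M + D) *m x = v by rewrite /x mulKVmx.
have ey : M *m y = v by rewrite /y mulKVmx.
have eys : ctrmx y *m M = ctrmx v by rewrite -ey ctrmx_mul hM.
have key : ctrmx v *m y - ctrmx v *m x =
    ctrmx (x - y) *m M *m (x - y) + ctrmx x *m D *m x.
  clearbody x y.
  have r1 : ctrmx x *m M *m x = ctrmx x *m v - ctrmx x *m D *m x.
    by rewrite -ex mulmxDl mulmxDr !mulmxA addrK.
  have r2 : ctrmx x *m M *m y = ctrmx x *m v by rewrite -mulmxA ey.
  rewrite ctrmxB; mx_expand; rewrite r1 r2 !eys; mx_ring.
rewrite -subr_ge0 /qform -!mulmxA -/x -/y.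
rewrite (_ : _ - _ = (ctrmx v *m y - ctrmx v *m x) 0 0); last by rewrite !mxE.
rewrite key mxE; apply: addr_ge0; first exact: pdmx_qform_ge0.
exact: nnegD.
Qed.

Lemma pdmx_incr p (u : nat -> 'M[C]_p) :
  pdmx (u 0%N) -> (forall k, psdmx (u k.+1 - u k)) -> forall k, pdmx (u k).
Proof.
move=> pd0 incr; elim=> // k IH.
by rewrite -(subrKC (u k) (u k.+1)); exact: pdmxD.
Qed.

End PositiveMatrices.

Section Convergence.
Variable C : numClosedFieldType.
Implicit Types (u v : nat -> C) (a b c : C).

Definition cvgC u a := forall eps : C, 0 < eps ->
  exists N, forall k, (N <= k)%N -> `|u k - a| < eps.

Lemma eq_cvgC u v a : u =1 v -> cvgC u a -> cvgC v a.
Proof.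
by move=> e h eps e0; have [N hN] := h eps e0; exists N => k hk; rewrite -e hN.
Qed.

Lemma cvgC_cst c : cvgC (fun _ => c) c.
Proof. by move=> eps e0; exists 0%N => k _; rewrite subrr normr0. Qed.

Lemma cvgCD u v a b : cvgC u a -> cvgC v b -> cvgC (fun k => u k + v k) (a + b).
Proof.
move=> hu hv eps e0; have e2 : 0 < eps / 2%:R by rewrite divr_gt0 ?ltr0n.
have [N1 h1] := hu _ e2; have [N2 h2] := hv _ e2; exists (maxn N1 N2) => k.
rewrite geq_max => /andP[hk1 hk2].
rewrite (splitr eps) (_ : u k + v k - (a + b) = (u k - a) + (v k - b)); last by ring.
exact: le_lt_trans (ler_normD _ _) (ltrD (h1 k hk1) (h2 k hk2)).
Qed.

Lemma cvgCMl c u a : cvgC u a -> cvgC (fun k => c * u k) (c * a).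
Proof.
move=> hu eps e0; have d0 : 0 < `|c| + 1 by rewrite ltr_wpDl.
have [N h] := hu (eps / (`|c| + 1)) (divr_gt0 e0 d0); exists N => k hk.
rewrite -mulrBr normrM.
apply: (@le_lt_trans _ _ ((`|c| + 1) * `|u k - a|)).
  by apply: ler_wpM2r; rewrite ?normr_ge0 // lerDl ler01.
by rewrite mulrC -ltr_pdivlMr //; exact: h.
Qed.

Lemma cvgCB u v a b : cvgC u a -> cvgC v b -> cvgC (fun k => u k - v k) (a - b).
Proof.
move=> hu /(cvgCMl (-1)) hv; rewrite -mulN1r; apply: eq_cvgC (cvgCD hu hv) => k.
by rewrite mulN1r.
Qed.

Lemma cvgC_conj u a : cvgC u a -> cvgC (fun k => (u k)^*) a^*.
Proof.
move=> hu eps e0; have [N h] := hu eps e0.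
by exists N => k hk; rewrite -rmorphB norm_conjC h.
Qed.

Lemma cvgC_unique u a b : cvgC u a -> cvgC u b -> a = b.
Proof.
move=> ha hb; apply/eqP; rewrite -subr_eq0; apply/negP => /negP nz.
have d2 : 0 < `|a - b| / 2%:R by rewrite divr_gt0 ?ltr0n ?normr_gt0.
have [N1 h1] := ha _ d2; have [N2 h2] := hb _ d2; set k := maxn N1 N2.
have := ltrD (h1 k (leq_maxl _ _)) (h2 k (leq_maxr _ _)); rewrite -splitr.
rewrite (_ : a - b = (u k - b) - (u k - a)); last by ring.
by rewrite addrC => /(le_lt_trans (ler_normB _ _)); rewrite ltxx.
Qed.

Lemma cvgC_sum (I : Type) (s : seq I) (F : I -> nat -> C) (L : I -> C) :
  (forall i, cvgC (F i) (L i)) ->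
  cvgC (fun k => \sum_(i <- s) F i k) (\sum_(i <- s) L i).
Proof.
move=> h; elim: s => [|i s IH].
  by apply: eq_cvgC (cvgC_cst _) => k; rewrite !big_nil.
by rewrite big_cons; apply: eq_cvgC (cvgCD (h i) IH) => k; rewrite big_cons.
Qed.

(* The limit is minus the supremum of [- u k], supplied by [real_complete]. *)
Lemma cvgC_nonincreasing (hC : real_complete C) u :
  (forall k, 0 <= u k) -> (forall k, u k.+1 <= u k) ->
  exists2 l, cvgC u l & 0 <= l.
Proof.
move=> u_ge0 u_dec.
have u_mono N k : (N <= k)%N -> u k <= u N.
  exact: (homo_leq (r := fun x y => y <= x) (@lexx _ _)
    (fun _ _ _ h1 h2 => le_trans h2 h1) u_dec).
pose E x := exists k, x = - u k.
have Er x : E x -> x \is Num.real by move=> [k ->]; rewrite rpredN ger0_real.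
have E_le0 x : E x -> x <= 0 by move=> [k ->]; rewrite oppr_le0.
have [s [sr [s_ub s_least]]] : exists s, s \is Num.real /\ (forall x, E x -> x <= s) /\
    (forall M, M \is Num.real -> (forall x, E x -> x <= M) -> s <= M).
  apply: hC => //; first by exists (- u 0%N), 0%N.
  by exists 0; split; first exact: real0.
exists (- s); last by rewrite oppr_ge0 s_least ?real0.
move=> eps e0; have er : s - eps \is Num.real by rewrite rpredB // gtr0_real.
have [N hN] : exists N, s - eps < - u N.
  apply: NNPP => hne; have : s <= s - eps.
    apply: s_least => // x [k ->]; have rk : - u k \is Num.real by apply: Er; exists k.
    by rewrite real_leNgt //; apply/negP => hk; apply: hne; exists k.
  by rewrite lerBrDl gerDr (lt_geF e0).
exists N => k hk; have hk1 : - u N <= - u k by rewrite lerN2 u_mono.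
have hk2 : - u k <= s by apply: s_ub; exists k.
rewrite opprK ger0_norm; last by rewrite -lerBlDl sub0r.
by have := lt_le_trans hN hk1; rewrite ltrBlDl ltrBrDl.
Qed.

Lemma eventually_forall_fin (T : finType) (P : T -> nat -> Prop) :
  (forall t N N', (N <= N')%N -> P t N -> P t N') ->
  (forall t, exists N, P t N) -> exists N, forall t, P t N.
Proof.
move=> P_mono P_ev.
suff [N hN] : exists N, forall t, t \in enum T -> P t N.
  by exists N => t; apply: hN; rewrite mem_enum.
elim: (enum T) => [|t s [N hN]]; first by exists 0%N.
have [N1 h1] := P_ev t; exists (maxn N1 N) => t'; rewrite inE => /orP [/eqP -> | ht].
  exact: P_mono (leq_maxl _ _) h1.
exact: P_mono (leq_maxr _ _) (hN _ ht).
Qed.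

End Convergence.

Section MatrixLimits.
Variable C : numClosedFieldType.

Lemma ctrmx_delta p (r : 'I_p) : ctrmx (delta_mx r 0 : 'cV[C]_p) = delta_mx 0 r.
Proof.
apply/matrixP=> i j; rewrite ctrmxE !mxE.
by case: (j == r); case: (i == 0); rewrite /= ?conjC1 ?conjC0.
Qed.

Lemma qform_polarization p (M : 'M[C]_p) (r c : 'I_p) :
  let e i := (delta_mx i 0 : 'cV[C]_p) in
  M r c = 2%:R^-1 * ((qform M (e r + e c) - qform M (e r) - qform M (e c))
            - 'i * (qform M (e r + 'i *: e c) - qform M (e r) - qform M (e c))).
Proof.
move=> e; have n2 : (2%:R : C) != 0 by rewrite pnatr_eq0.
apply: (mulfI n2); rewrite mulrA mulfV // mul1r.
rewrite /qform /e !ctrmxD ctrmxZ !ctrmx_delta conjCi -!/(mxentry 0 0 _).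
mx_expand; rewrite ?mxentryD ?mxentryN ?mxentryZ.
have entry (r' c' : 'I_p) :
    mxentry 0 0 ((delta_mx 0 r' : 'rV_p) *m M *m (delta_mx c' 0 : 'cV_p)) = M r' c'.
  by rewrite /mxentry -rowE -colE !mxE.
rewrite !entry.
repeat progress rewrite ?mulrDr ?mulrBr ?mulrN ?mulNr ?mulrA ?mulCii.
ring.
Qed.

Lemma qformE p (M : 'M[C]_p) v :
  qform M v = \sum_(j < p) v j 0 * \sum_(i < p) (ctrmx v 0 i * M i j).
Proof. by rewrite /qform mxE; apply: eq_bigr => j _; rewrite mxE mulrC. Qed.

Lemma mx_cvg_entrywise p q (M : nat -> 'M[C]_(p, q)) (L : 'M[C]_(p, q)) :
  (forall r c, cvgC (fun k => M k r c) (L r c)) -> mx_cvg M L.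
Proof.
move=> cvgM eps e0.
have [N hN] : exists N, forall rc : 'I_p * 'I_q, forall k, (N <= k)%N ->
    `|M k rc.1 rc.2 - L rc.1 rc.2| < eps.
  apply: eventually_forall_fin => [t N N' leNN' h k hk|[r c]].
    by apply: h; exact: leq_trans leNN' hk.
  exact: cvgM.
by exists N => k hk i j; exact: (hN (i, j) k hk).
Qed.

Lemma psdmx_nonincreasing_cvg (hC : real_complete C) p (M : nat -> 'M[C]_p) :
  (forall k, psdmx (M k)) -> (forall k v, qform (M k.+1) v <= qform (M k) v) ->
  exists L, mx_cvg M L /\ psdmx L.
Proof.
move=> psdM decM.
have hl v : exists l, cvgC (fun k => qform (M k) v) l /\ 0 <= l.
  have [l ? ?] := cvgC_nonincreasing hC (fun k => (psdM k).2 v) (fun k => decM k v).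
  by exists l.
pose lim v := proj1_sig (constructive_indefinite_description _ (hl v)).
have [lim_cvg lim_ge0] : (forall v, cvgC (fun k => qform (M k) v) (lim v)) /\
    (forall v, 0 <= lim v).
  by split=> v; rewrite /lim; case: constructive_indefinite_description => ? [].
pose e i := (delta_mx i 0 : 'cV[C]_p).
pose L := \matrix_(r, c) (2%:R^-1 * ((lim (e r + e c) - lim (e r) - lim (e c))
            - 'i * (lim (e r + 'i *: e c) - lim (e r) - lim (e c)))).
have cvgM r c : cvgC (fun k => M k r c) (L r c).
  rewrite mxE; apply: eq_cvgC (cvgCMl _ (cvgCB (cvgCB (cvgCB (lim_cvg _) (lim_cvg _))
    (lim_cvg _)) (cvgCMl _ (cvgCB (cvgCB (lim_cvg _) (lim_cvg _)) (lim_cvg _))))) => k.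
  by rewrite -qform_polarization.
have qform_cvg v : cvgC (fun k => qform (M k) v) (qform L v).
  rewrite qformE; apply: eq_cvgC; first by move=> k; rewrite qformE.
  apply: cvgC_sum => j; apply: cvgCMl; apply: cvgC_sum => i.
  exact: cvgCMl.
exists L; split; first exact: mx_cvg_entrywise.
split.
  apply/matrixP=> r c; rewrite ctrmxE.
  apply: (cvgC_unique (cvgC_conj (cvgM c r))); apply: eq_cvgC (cvgM r c) => k.
  by rewrite -ctrmxE (psdM k).1.
by move=> v; rewrite -/(qform L v) (cvgC_unique (qform_cvg v) (lim_cvg v)).
Qed.

Lemma invmx_psd_incr_cvg (hC : real_complete C) p (S : nat -> 'M[C]_p) :
  pdmx (S 0%N) -> (forall k, psdmx (S k.+1 - S k)) ->
  exists L, mx_cvg (fun k => invmx (S k)) L /\ psdmx L.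
Proof.
move=> pd0 incr; have pdS := pdmx_incr pd0 incr.
apply: psdmx_nonincreasing_cvg => // [k|k v]; first exact: psdmx_invmx.
by rewrite -(subrKC (S k) (S k.+1)); exact: qform_invmxD_le.
Qed.

End MatrixLimits.

Unset Implicit Arguments. Set Strict Implicit.

Theorem mainTheorem3 (C : numClosedFieldType) (hC : real_complete C)
  (n m1 m2 : nat) (hm1 : (0 < m1)%N) (hm2 : (0 < m2)%N)
  (A S0 : 'M[C]_n) (Pi0 : 'M[C]_(n, m1 + m2))
  (hadm : admissible A S0 Pi0)
  (hi : ~~ eigenvalue A 'i) (hmi : ~~ eigenvalue A (- 'i)) :
  let th1 := lsubmx Pi0 in
  let th2 := rsubmx Pi0 in
  let Ap := 1%:M + 'i *: invmx A in
  let Am := 1%:M - 'i *: invmx A in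
  let R := fun k : nat => invmx (Ap ^+ k) *m Sseq A S0 Pi0 k
                          *m invmx ((1%:M - 'i *: invmx (ctrmx A)) ^+ k) in
  let Q := fun k : nat => invmx (Am ^+ k) *m Sseq A S0 Pi0 k
                          *m invmx ((1%:M + 'i *: invmx (ctrmx A)) ^+ k) in
  (forall k : nat,
     Piseq A Pi0 k = row_mx (Ap ^+ k *m th1) (Am ^+ k *m th2)
     /\ R k.+1 - R k =
          2%:R *: (invmx (Ap ^+ k.+1) *m invmx A *m Am ^+ k *m th2 *m ctrmx th2
                   *m ctrmx (Am ^+ k) *m ctrmx (invmx A) *m ctrmx (invmx (Ap ^+ k.+1)))
     /\ psdmx (R k.+1 - R k)
     /\ psdmx (Q k.+1 - Q k))
  /\ (exists kR : 'M[C]_n, mx_cvg (fun k => invmx (R k)) kR /\ psdmx kR)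
  /\ (exists kQ : 'M[C]_n, mx_cvg (fun k => invmx (Q k)) kQ /\ psdmx kQ).
Proof.
move=> th1 th2 Ap Am R Q; rewrite {}/R {}/Q {}/Ap {}/Am {}/th1 {}/th2.
have [_ [pdS0 _]] := hadm.
have incrR k := Rseq_succ_sub hadm k hmi.
have incrQ k := Qseq_succ_sub hadm k hi.
split; last first.
  split; apply: invmx_psd_incr_cvg; rewrite // ?expr0 ?invmx1 ?mul1mx ?mulmx1 //.
    by move=> k; rewrite incrR; exact: psdmx_gram.
  by move=> k; rewrite incrQ; exact: psdmx_gram.
move=> k; rewrite incrR incrQ; split; first exact: Piseq_blocks.
split; first by rewrite !ctrmx_mul !mulmxA.
by split; exact: psdmx_gram.
Qed.
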